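(* The Hopf algebra $(dWHA,m,\mu)$ is selfdual with respect to the bilinear form $\langle\cdot,\cdot\rangle$ defined on substitutions by $\left\langle \binom{\rho}{\sigma},\binom{\rho'}{\sigma'}\right\rangle=1$ if after a renaming of letters one has $\rho=\sigma'$ and $\rho'=\sigma$, and $=0$ otherwise. That is, for all substitutions $p,p',p''$: $\langle m(p\otimes p'),p''\rangle=\langle p\otimes p',\mu(p'')\rangle$, where $\langle a\otimes b,c\otimes d\rangle=\langle a,c\rangle\langle b,d\rangle$.
   Context: Words are finite sequences of letters; $*$ denotes concatenation; the support $\mathrm{supp}(\alpha)$ of a word is the set of letters occurring in it. The shuffle product $\alpha\times_{sh}\beta$ of words $\alpha=[c_1,\dots,c_p]$, $\beta=[d_1,\dots,d_q]$ is the sum, with multiplicities, over all ways of choosing $p$ of the $p+q$ positions, of the word obtained by placing the $c$'s in their original order in the chosen positions and the $d$'s in their original order in the remaining ones. A subword of $[a_1,\dots,a_m]$ is a word $[a_{i_1},\dots,a_{i_r}]$ with $i_1<\dots<i_r$. Definition of $dWHA$: Let $\mathcal X$ be a countably infinite alphabet. A substitution is a pair $p=\binom{\rho}{\sigma}$ of words over $\mathcal X$ with $\mathrm{supp}(\rho)=\mathrm{supp}(\sigma)$, considered up to simultaneously renaming the letters of both words by a bijection of $\mathcal X$. $dWHA$ is the free abelian group with basis all substitutions (including the empty substitution $\binom{[\,]}{[\,]}$), graded by $\deg(p)=\#\mathrm{supp}(\rho)$. Multiplication: for substitutions $p=\binom{\rho}{\sigma}$, $p'=\binom{\rho'}{\sigma'}$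 written with $\mathrm{supp}(\rho)\cap\mathrm{supp}(\rho')=\emptyset$, $m(p\otimes p')=\binom{\rho*\rho'}{\sigma\times_{sh}\sigma'}$, meaning the sum of $\binom{\rho*\rho'}{\gamma}$ over the terms $\gamma$ (with multiplicity) of $\sigma\times_{sh}\sigma'$. The unit is the empty substitution. A good cut of a word $\sigma$ is a factorization $\sigma=\sigma_1*\sigma_2$ with $\mathrm{supp}(\sigma_1)\cap\mathrm{supp}(\sigma_2)=\emptyset$ (the two trivial cuts included). Comultiplication: $\mu(p)=\sum \binom{p^{-1}(\sigma_1)}{\sigma_1}\otimes\binom{p^{-1}(\sigma_2)}{\sigma_2}$, summed over all good cuts $\sigma=\sigma_1*\sigma_2$, where $p^{-1}(\sigma_i)$ is the subword of $\rho$ consisting of all occurrences in $\rho$ of letters of $\mathrm{supp}(\sigma_i)$. Counit: $\varepsilon$ is $1$ on the empty substitution and $0$ on all other substitutions. This is a Hopf algebra. *)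

From mathcomp Require Import all_boot.
From Stdlib Require Import ClassicalEpsilon.
Set Implicit Arguments. Unset Strict Implicit. Unset Printing Implicit Defensive.

Definition word := seq nat.

Definition is_subst (rho sigma : word) : Prop := rho =i sigma.

(* Shuffle product, as a list of words with multiplicities:
   sh [] t = [t], sh s [] = [s],
   sh (a::s) (b::t) = a.(sh s (b::t)) ++ b.(sh (a::s) t). *)
Fixpoint shuffle (s t : word) : seq word :=
  match s with
  | [::] => [:: t]
  | a :: s' =>
      let fix sh_t (t : word) : seq word :=
        match t with
        | [::] => [:: s]
        | b :: t' => map (cons a) (shuffle s' t) ++ map (cons b) (sh_t t')
        end in
      sh_t t
  end.

Definition same_subst (rho sigma rho' sigma' : word) : Prop :=
  exists f : nat -> nat, bijective f /\ map f rho = rho' /\ map f sigma = sigma'.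

(* The bilinear form on basis elements:
   <(rho,sigma),(rho',sigma')> = 1 iff, after renaming, rho = sigma' and
   rho' = sigma, i.e. (rho,sigma) ~ (sigma',rho'); 0 otherwise. *)
Definition pairing (rho sigma rho' sigma' : word) : nat :=
  if excluded_middle_informative (same_subst rho sigma sigma' rho') then 1 else 0.

(* <m(p (x) p'), p''> where p, p' have disjoint supports:
   sum over gamma in sigma shuffle sigma' of <(rho*rho', gamma), p''>. *)
Definition pair_mul (rho sigma rho' sigma' rho'' sigma'' : word) : nat :=
  \sum_(g <- shuffle sigma sigma') pairing (rho ++ rho') g rho'' sigma''.

Definition good_cut (sigma : word) (i : nat) : bool :=
  ~~ has (fun x => x \in take i sigma) (drop i sigma).

Definition preimage_word (rho sigma_i : word) : word :=
  filter (fun x => x \in sigma_i) rho.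

Definition pair_comul (rho sigma rho' sigma' rho'' sigma'' : word) : nat :=
  \sum_(i <- iota 0 (size sigma'').+1 | good_cut sigma'' i)
    pairing rho sigma (preimage_word rho'' (take i sigma'')) (take i sigma'')
    * pairing rho' sigma' (preimage_word rho'' (drop i sigma'')) (drop i sigma'').

(* Both sides are 0 or 1.  A term on the left is 1 when some renaming f maps
   (rho rho', gamma) to (sigma'', rho''); since gamma uses only letters of
   rho rho' on which f is determined, at most one shuffle gamma qualifies.
   A term on the right forces the cut to sit at |rho|, so at most one cut
   qualifies.  The two conditions are equivalent: f restricts to renamings of
   both factors at the cut |rho| (a good cut because rho and rho' are
   disjoint), and conversely renamings of the two factors at a good cut have
   disjoint images on disjoint domains, so they glue to one bijection of the
   alphabet, which carries the shuffles of sigma and sigma' onto the shuffles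
   of the two preimage words, among which rho'' lies. *)
From mathcomp Require Import all_boot.
From Stdlib Require Import ClassicalEpsilon.
Set Implicit Arguments. Unset Strict Implicit. Unset Printing Implicit Defensive.

Lemma shuffle_nil_r (s : word) : shuffle s [::] = [:: s].
Proof. by case: s. Qed.

Lemma shuffle_cons a s b t : shuffle (a :: s) (b :: t) =
  map (cons a) (shuffle s (b :: t)) ++ map (cons b) (shuffle (a :: s) t).
Proof. by []. Qed.

Lemma shuffle_consl a s t w : w \in shuffle s t -> a :: w \in shuffle (a :: s) t.
Proof.
by case: t => [|b t]; rewrite ?shuffle_nil_r ?shuffle_cons ?mem_cat ?inE;
  [move=> /eqP -> | move=> /(map_f (cons a)) ->].
Qed.

Lemma shuffle_consr b s t w : w \in shuffle s t -> b :: w \in shuffle s (b :: t).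
Proof.
by case: s => [|a s]; rewrite ?shuffle_cons ?mem_cat ?inE;
  [move=> /eqP -> | move=> /(map_f (cons b)) ->; rewrite orbT].
Qed.

Lemma map_shuffle (f : nat -> nat) s t :
  shuffle (map f s) (map f t) = map (map f) (shuffle s t).
Proof.
elim: s t => [|a s IHs] t //; elim: t => [|b t IHt]; first by rewrite !shuffle_nil_r.
rewrite [map f (a :: s)]/= [map f (b :: t)]/= shuffle_cons -/(map f (b :: t)) IHs.
by rewrite -/(map f (a :: s)) IHt shuffle_cons map_cat -!map_comp.
Qed.

Lemma mem_shuffle_filter (p : pred nat) w :
  w \in shuffle (filter p w) (filter (predC p) w).
Proof.
elim: w => [|a w IH] //=.
by case: (p a) => /=; [exact: shuffle_consl | exact: shuffle_consr].
Qed.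

Lemma mem_shuffle_subset s t g : g \in shuffle s t -> {subset g <= s ++ t}.
Proof.
elim: s t g => [|a s IHs] t g; first by rewrite inE => /eqP ->.
elim: t g => [|b t IHt] g; first by rewrite shuffle_nil_r inE cats0 => /eqP ->.
rewrite shuffle_cons mem_cat => /orP[] /mapP[g' g'S ->] x; rewrite inE.
  case/predU1P=> [-> | /(IHs _ _ g'S)]; first by rewrite inE eqxx.
  by rewrite /= !(inE, mem_cat) => /orP[] ->; rewrite !orbT.
case/predU1P=> [-> | /(IHt _ g'S)]; first by rewrite mem_cat !inE eqxx !orbT.
by rewrite /= !(inE, mem_cat) => /or3P[] ->; rewrite ?orbT.
Qed.

Section ShuffleDisjoint.

Variables (p q : pred nat).
Hypothesis disj_pq : forall x, p x -> ~~ q x.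

Lemma filter_shuffle s t g : g \in shuffle s t -> all p s -> all q t ->
  filter p g = s /\ filter q g = t.
Proof.
have filter_none (r r' : pred nat) u :
  all r u -> (forall x, r x -> ~~ r' x) -> filter r' u = [::].
  move=> ru hr; rewrite -(filter_pred0 u); apply: eq_in_filter => x /(allP ru).
  by move/hr/negbTE.
elim: s t g => [|a s IHs] t g.
  rewrite inE => /eqP -> _ qt; split; last exact/all_filterP.
  by apply: filter_none qt _ => x qx; apply/negP=> /disj_pq; rewrite qx.
elim: t g => [|b t IHt] g.
  rewrite shuffle_nil_r inE => /eqP -> ps _.
  by split; [exact/all_filterP | exact: filter_none ps disj_pq].
rewrite shuffle_cons mem_cat => /orP[] /mapP[g' g'S ->]
  /[dup] ps' /andP[pa ps] /[dup] qt' /andP[qb qt] /=.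
  by rewrite pa (negbTE (disj_pq pa)); case: (IHs _ _ g'S ps qt') => -> ->.
have -> : p b = false by apply/negP=> /disj_pq; rewrite qb.
by rewrite qb; case: (IHt _ g'S ps' qt) => -> ->.
Qed.

Lemma uniq_shuffle s t : all p s -> all q t -> uniq (shuffle s t).
Proof.
elim: s t => [|a s IHs] t //; elim: t => [|b t IHt]; first by rewrite shuffle_nil_r.
move=> /[dup] ps' /andP[pa ps] /[dup] qt' /andP[qb qt].
have cons_inj (c : nat) : injective (cons c) by move=> x y [].
rewrite shuffle_cons cat_uniq !(map_inj_uniq (cons_inj _)) IHs ?IHt ?andbT //.
apply/hasPn => _ /mapP[g _ ->]; apply/mapP => -[g' _ [ab _]].
by move: qb; rewrite ab (negbTE (disj_pq pa)).
Qed.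

End ShuffleDisjoint.

Definition swapn (a b x : nat) : nat :=
  if x == a then b else if x == b then a else x.

Lemma swapnK a b : involutive (swapn a b).
Proof.
move=> x; rewrite /swapn.
have [-> | xa] := eqVneq x a.
  by have [-> | ba] := eqVneq b a; rewrite ?eqxx.
have [-> | xb] := eqVneq x b; first by rewrite !eqxx.
by rewrite (negbTE xa) (negbTE xb).
Qed.

Lemma bijective_extension (s : seq nat) (g : nat -> nat) :
  {in s &, injective g} -> exists2 f, bijective f & {in s, f =1 g}.
Proof.
elim: s => [|x s IH] g_inj; first by exists id => //; exists id.
have [h h_bij hg] : exists2 h, bijective h & {in s, h =1 g}.
  by apply: IH; apply: sub_in2 g_inj => y ys; rewrite inE ys orbT.
have [xs | xNs] := boolP (x \in s).
  by exists h => // y; rewrite inE => /predU1P[-> |]; apply: hg.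
exists (swapn (h x) (g x) \o h); first exact: bij_comp (inv_bij (swapnK _ _)) h_bij.
move=> y; rewrite inE => /predU1P[-> | ys] /=; first by rewrite /swapn eqxx.
have yx : y != x by apply: contraNneq xNs => <-.
rewrite /swapn (inj_eq (bij_inj h_bij)) (negbTE yx) hg //.
by rewrite (inj_in_eq g_inj) ?inE ?ys ?eqxx ?orbT // (negbTE yx).
Qed.

Lemma bijective_glue (s1 s2 : seq nat) (f1 f2 : nat -> nat) :
  injective f1 -> injective f2 -> ~~ has (mem s1) s2 ->
  ~~ has (mem (map f1 s1)) (map f2 s2) ->
  exists2 f, bijective f & {in s1, f =1 f1} /\ {in s2, f =1 f2}.
Proof.
move=> f1_inj f2_inj /hasPn disj /hasPn img_disj.
pose g x := if x \in s1 then f1 x else f2 x.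
have g_inj : {in s1 ++ s2 &, injective g}.
  move=> x y; rewrite !mem_cat /g.
  have cross u v : u \in s1 -> v \in s2 -> f1 u != f2 v.
    move=> us1 vs2; apply: contraNneq (img_disj _ (map_f f2 vs2)) => <-.
    exact: map_f.
  case xs1: (x \in s1); case ys1: (y \in s1) => //= xs ys.
  - exact: f1_inj.
  - by move/eqP; rewrite (negbTE (cross _ _ xs1 ys)).
  - by move/esym/eqP; rewrite (negbTE (cross _ _ ys1 xs)).
  - exact: f2_inj.
have [f f_bij fg] := bijective_extension g_inj.
exists f => //; split => x xs.
  by rewrite fg ?mem_cat ?xs // /g xs.
have xNs1 : x \notin s1 := disj x xs.
by rewrite fg ?mem_cat ?xs ?orbT // /g (negbTE xNs1).
Qed.

Definition indicator (P : Prop) : nat :=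
  if excluded_middle_informative P then 1 else 0.

Lemma pairingE a b c d : pairing a b c d = indicator (same_subst a b d c).
Proof. by []. Qed.

Lemma indicator_iff (P Q : Prop) : (P <-> Q) -> indicator P = indicator Q.
Proof.
rewrite /indicator => PQ.
by do 2 case: excluded_middle_informative => //=; tauto.
Qed.

Lemma indicator_andM (P Q : Prop) : indicator P * indicator Q = indicator (P /\ Q).
Proof.
rewrite /indicator.
by do 3 case: excluded_middle_informative => //=; tauto.
Qed.

Lemma sum_indicator_uniq (T : eqType) (s : seq T) (P : T -> Prop) :
  uniq s -> {in s &, forall x y, P x -> P y -> x = y} ->
  \sum_(x <- s) indicator (P x) = indicator (exists2 x, x \in s & P x).
Proof.
move=> s_uniq P_unique; rewrite {2}/indicator.
case: excluded_middle_informative => [[x xs Px] | noP].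
  rewrite (bigD1_seq x) //= big1_seq => [|y /andP[yx ys]].
    by rewrite /indicator; case: excluded_middle_informative.
  rewrite /indicator; case: excluded_middle_informative => // Py.
  by rewrite (P_unique _ _ ys xs Py Px) eqxx in yx.
rewrite big1_seq // => x /andP[_ xs]; rewrite /indicator.
by case: excluded_middle_informative => // Px; case: noP; exists x.
Qed.

Lemma same_subst_size a b c d : same_subst a b c d -> size a = size c.
Proof. by case=> f [_ [<- _]]; rewrite size_map. Qed.

Lemma preimage_word_map (f : nat -> nat) g s : injective f ->
  preimage_word (map f g) (map f s) = map f (filter (mem s) g).
Proof.
move=> f_inj; rewrite /preimage_word filter_map.
by congr map; apply: eq_filter => x /=; rewrite mem_map.
Qed.

Lemma good_cut_mem_drop (s : word) i x : good_cut s i -> x \in s ->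
  (x \in drop i s) = (x \notin take i s).
Proof.
move=> /hasPn cut_i; rewrite -{1}(cat_take_drop i s) mem_cat => /orP[xt | xd].
  by rewrite xt; apply/negP => /cut_i; rewrite xt.
by rewrite xd cut_i.
Qed.

Section SelfDuality.

Variables rho sigma rho' sigma' rho'' sigma'' : word.
Hypotheses (subst_l : is_subst rho sigma) (subst_r : is_subst rho' sigma')
  (subst'' : is_subst rho'' sigma'') (disj : ~~ has (mem rho) rho').

Let mul_match g := same_subst (rho ++ rho') g sigma'' rho''.

Let cut_match i :=
  same_subst rho sigma (take i sigma'') (preimage_word rho'' (take i sigma'')) /\
  same_subst rho' sigma' (drop i sigma'') (preimage_word rho'' (drop i sigma'')).

Let cuts := [seq i <- iota 0 (size sigma'').+1 | good_cut sigma'' i].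

Let rho_rho' x : x \in rho -> x \notin rho'.
Proof. by move=> xr; apply: contraL xr; apply: (hasPn disj). Qed.

Let sigma_in_rho : all (mem rho) sigma.
Proof. by apply/allP => x; rewrite inE subst_l. Qed.

Let sigma'_in_rho' : all (mem rho') sigma'.
Proof. by apply/allP => x; rewrite inE subst_r. Qed.

Lemma mul_match_unique : {in shuffle sigma sigma' &, forall g1 g2,
  mul_match g1 -> mul_match g2 -> g1 = g2}.
Proof.
move=> g1 g2 _ g2S [f1 [f1_bij [f1D f1C]]] [f2 [_ [f2D f2C]]].
have f12 : {in rho ++ rho', f1 =1 f2} by apply/eq_in_map; rewrite f1D f2D.
apply: (inj_map (bij_inj f1_bij)); rewrite f1C -f2C; apply/eq_in_map => x.
move/(mem_shuffle_subset g2S); rewrite !mem_cat -subst_l -subst_r => x_rr'.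
by rewrite f12 // mem_cat.
Qed.

Lemma cut_match_unique : {in cuts &, forall i j, cut_match i -> cut_match j -> i = j}.
Proof.
have cut_size i : i \in cuts -> cut_match i -> i = size rho.
  rewrite mem_filter mem_iota ltnS => /andP[_ i_le] [/same_subst_size ->].
  by rewrite size_takel.
by move=> i j ic jc /(cut_size _ ic) -> /(cut_size _ jc).
Qed.

Let mul_match_cut g : g \in shuffle sigma sigma' -> mul_match g ->
  exists2 i, i \in cuts & cut_match i.
Proof.
move=> gS [f [f_bij [fD fC]]]; have f_inj := bij_inj f_bij.
have [g_sigma g_sigma'] := filter_shuffle rho_rho' gS sigma_in_rho sigma'_in_rho'.
rewrite map_cat in fD.
have fT : take (size rho) sigma'' = map f rho by rewrite -fD take_size_cat ?size_map.
have fD' : drop (size rho) sigma'' = map f rho' by rewrite -fD drop_size_cat ?size_map.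
exists (size rho).
  have rho_le : size rho <= size sigma'' by rewrite -fD size_cat size_map leq_addr.
  rewrite mem_filter mem_iota leq0n add0n ltnS rho_le !andbT.
  rewrite /good_cut fT fD'; apply/hasPn => _ /mapP[x xr' ->].
  by rewrite mem_map //; apply: contraL xr' => /rho_rho'.
rewrite /cut_match fT fD' -fC !preimage_word_map // g_sigma g_sigma'.
by split; exists f.
Qed.

Let cut_match_mul i : i \in cuts -> cut_match i ->
  exists2 g, g \in shuffle sigma sigma' & mul_match g.
Proof.
rewrite mem_filter => /andP[cut_i _] [[f1 [f1_bij [f1T f1C]]] [f2 [f2_bij [f2D f2C]]]].
have img_disj : ~~ has (mem (map f1 rho)) (map f2 rho') by rewrite f1T f2D.
have [f f_bij [ff1 ff2]] := bijective_glue (bij_inj f1_bij) (bij_inj f2_bij) disj img_disj.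
have f_sigma : map f sigma = preimage_word rho'' (take i sigma'').
  by rewrite -f1C; apply/eq_in_map => x; rewrite -subst_l => /ff1.
have f_sigma' : map f sigma' = preimage_word rho'' (drop i sigma'').
  by rewrite -f2C; apply/eq_in_map => x; rewrite -subst_r => /ff2.
have : rho'' \in map (map f) (shuffle sigma sigma').
  rewrite -map_shuffle f_sigma f_sigma' /preimage_word.
  rewrite (@eq_in_filter _ (mem (drop i sigma'')) (predC (mem (take i sigma''))));
    first exact: mem_shuffle_filter.
  by move=> x; rewrite subst'' => /(good_cut_mem_drop cut_i).
case/mapP=> g gS fg; exists g => //; exists f; split=> //; split=> //.
rewrite map_cat -(cat_take_drop i sigma'') -f1T -f2D.
by congr cat; apply/eq_in_map.
Qed.

Lemma mul_match_iff_cut_match :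
  (exists2 g, g \in shuffle sigma sigma' & mul_match g) <->
  (exists2 i, i \in cuts & cut_match i).
Proof. by split=> [[g] | [i]]; [exact: mul_match_cut | exact: cut_match_mul]. Qed.

Lemma pair_mulE : pair_mul rho sigma rho' sigma' rho'' sigma'' =
  indicator (exists2 g, g \in shuffle sigma sigma' & mul_match g).
Proof.
rewrite /pair_mul; under eq_bigr do rewrite pairingE.
apply: sum_indicator_uniq mul_match_unique.
exact: (@uniq_shuffle (mem rho) (mem rho') rho_rho').
Qed.

Lemma pair_comulE : pair_comul rho sigma rho' sigma' rho'' sigma'' =
  indicator (exists2 i, i \in cuts & cut_match i).
Proof.
rewrite /pair_comul -big_filter; under eq_bigr do rewrite !pairingE indicator_andM.
exact: sum_indicator_uniq (filter_uniq _ (iota_uniq _ _)) cut_match_unique.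
Qed.

End SelfDuality.

Theorem theorem7p11 (rho sigma rho' sigma' rho'' sigma'' : seq nat) :
  is_subst rho sigma -> is_subst rho' sigma' -> is_subst rho'' sigma'' ->
  ~~ has (fun x => x \in rho) rho' ->
  pair_mul rho sigma rho' sigma' rho'' sigma'' =
  pair_comul rho sigma rho' sigma' rho'' sigma''.
Proof.
move=> subst_l subst_r subst'' disj.
rewrite pair_mulE // pair_comulE //.
exact/indicator_iff/mul_match_iff_cut_match.
Qed.
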